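(* Let $(A,+,\cdot)$ be a left brace with $A^{(3)}=\{0\}$ and let $a\in A$. For $i\in\mathbb{Z}$ let $a_i=\lambda_{a^i}(a)=-a^i+a^{i+1}$ (where $a^i$ is the $i$-th power of $a$ in $(A,\cdot)$; so $a_0=a$). Then the set \[B=\Bigl\{\sum_{i\in\mathbb{Z}}x_ia_i\;\Big|\; x_i\in\mathbb{Z}\text{ for all } i,\ \{i\mid x_i\neq0\}\text{ finite}\Bigr\}\] is the subbrace of $A$ generated by $a$. Moreover, if $D=\{\sum_{i\in\mathbb{Z}}x_ia_i\in B\mid \sum_{i\in\mathbb{Z}}x_i=0\}$ (sums over finitely supported integer families), then $B*B=D$.
   Context: A left brace $(A,+,\cdot)$ is a set $A$ with two binary operations such that $(A,+)$ is an abelian group, $(A,\cdot)$ is a group, and $a(b+c)=ab-a+ac$ for all $a,b,c\in A$. For $a,b\in A$ set $\lambda_a(b)=-a+ab$ and $a*b=-a+ab-b=\lambda_a(b)-b$. For subsets $L,M\subseteq A$, $L*M$ is the subgroup of $(A,+)$ generated by $\{l*m\mid l\in L,m\in M\}$. Set $A^{(1)}=A$ and $A^{(r+1)}=A^{(r)}*A$ for $r\ge1$. A subbrace of $A$ is a subset that is a subgroup of both $(A,+)$ and $(A,\cdot)$; the subbrace generated by $a$ is the intersection of all subbraces containing $a$. *)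

From mathcomp Require Import all_boot all_order all_algebra.
Set Implicit Arguments. Unset Strict Implicit. Unset Printing Implicit Defensive.
Import GRing.Theory.
Local Open Scope ring_scope.

Record left_brace (A : zmodType) (mul : A -> A -> A) (one : A) (inv : A -> A)
  : Prop := LeftBrace {
  lb_mulA : forall a b c, mul a (mul b c) = mul (mul a b) c;
  lb_mul1g : forall a, mul one a = a;
  lb_mulg1 : forall a, mul a one = a;
  lb_mulVg : forall a, mul (inv a) a = one;
  lb_mulgV : forall a, mul a (inv a) = one;
  lb_distr : forall a b c, mul a (b + c) = mul a b - a + mul a c
}.

Section Brace.
Variables (A : zmodType) (mul : A -> A -> A) (one : A) (inv : A -> A).

Definition blambda (a b : A) : A := - a + mul a b.
Definition bstar (a b : A) : A := - a + mul a b - b.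

Definition bpow (a : A) (n : int) : A :=
  match n with
  | Posz k => iter k (mul a) one
  | Negz k => iter k.+1 (mul (inv a)) one
  end.

Definition is_add_subgroup (S : A -> Prop) : Prop :=
  [/\ S 0, (forall x y, S x -> S y -> S (x + y)) & (forall x, S x -> S (- x))].

Definition is_mul_subgroup (S : A -> Prop) : Prop :=
  [/\ S one, (forall x y, S x -> S y -> S (mul x y)) & (forall x, S x -> S (inv x))].

Definition is_subbrace (S : A -> Prop) : Prop :=
  is_add_subgroup S /\ is_mul_subgroup S.

Definition gen_subbrace (a : A) : A -> Prop :=
  fun x => forall S, is_subbrace S -> S a -> S x.

Definition set_star (L M : A -> Prop) : A -> Prop :=
  fun x => forall S, is_add_subgroup S ->
    (forall l m, L l -> M m -> S (bstar l m)) -> S x.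

Fixpoint brace_series (r : nat) : A -> Prop :=
  match r with
  | 0 | 1 => fun _ => True
  | r'.+1 => set_star (brace_series r') (fun _ => True)
  end.

Definition a_idx (a : A) (i : int) : A := blambda (bpow a i) a.

Definition Bset (a : A) : A -> Prop :=
  fun b => exists (s : seq int) (x : int -> int),
    uniq s /\ b = \sum_(i <- s) (a_idx a i *~ x i).

Definition Dset (a : A) : A -> Prop :=
  fun b => exists (s : seq int) (x : int -> int),
    [/\ uniq s, b = \sum_(i <- s) (a_idx a i *~ x i) & \sum_(i <- s) x i = 0].

End Brace.

From HB Require Import structures.
From mathcomp Require Import all_boot all_order all_algebra zify.
Set Implicit Arguments. Unset Strict Implicit. Unset Printing Implicit Defensive.
Import GRing.Theory.
Local Open Scope ring_scope.

(* When A^(3) = 0,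
   every star p * q acts trivially (lambda_{p*q} c - c = (p*q)*c lies in A^(3)),
   and a conjugation identity turns this into lambda_{x+y} = lambda_x lambda_y:
   lambda is then also a morphism of (A,+).  Since a^j + a_j = a^(j+1), the
   element a_j acts like a, i.e. as the shift a_i |-> a_(i+1); hence an integer
   combination sum x_i a_i acts as the shift by its weight sum x_i.  Integer
   combinations, encoded as lists of (index, coefficient) pairs, are therefore
   stable under +, -, the product x y = x + lambda_x(y) and the inverse; they
   contain a and lie in every subbrace containing a, which is the first claim.
   For the second, l * m = lambda_l(m) - m is a shifted copy of m minus m, of
   weight 0; conversely a weight-0 combination is sum x_i (a_i - a), and
   a_i - a = a^i * a is a star of two elements of B. *)

Lemma add_subgroupMz (G : zmodType) (S : G -> Prop) (c : G) (n : int) :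
  is_add_subgroup S -> S c -> S (c *~ n).
Proof.
move=> [S0 SD SN] Sc.
have SMn m : S (c *+ m).
  by elim: m => [|m IH]; rewrite ?mulr0n ?mulrS //; apply: SD.
case: n => m; first exact: SMn.
by rewrite NegzE mulrNz; apply/SN/SMn.
Qed.

Lemma add_subgroup_sum (G : zmodType) (S : G -> Prop) (I : Type) (r : seq I)
    (F : I -> G) :
  is_add_subgroup S -> (forall i, S (F i)) -> S (\sum_(i <- r) F i).
Proof.
move=> [S0 SD _] SF.
by elim: r => [|i r IH]; rewrite ?big_nil ?big_cons //; apply: SD.
Qed.

(* Regrouping a sum over a list of pairs according to the first component;
   this converts list-encoded combinations to finitely supported families. *)
Lemma sum_group_fst (I J : eqType) (G : nmodType) (F : I * J -> G)
    (l : seq (I * J)) :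
  \sum_(i <- undup (map fst l)) \sum_(p <- l | p.1 == i) F p
  = \sum_(p <- l) F p.
Proof.
under eq_bigr do rewrite big_mkcond.
rewrite exchange_big /= big_seq [RHS]big_seq; apply: eq_bigr => p pl.
have p1_in : p.1 \in undup (map fst l) by rewrite mem_undup; apply: map_f.
rewrite (bigD1_seq p.1) ?undup_uniq //= eqxx big1 ?addr0 //.
by move=> i; rewrite eq_sym => /negbTE ->.
Qed.

Section LeftBrace.
Variables (A : zmodType) (mul : A -> A -> A) (one : A) (inv : A -> A).
Hypothesis HA : left_brace mul one inv.

Local Notation lam := (blambda mul).

Lemma lamD w : {morph lam w : b c / b + c}.
Proof. by move=> b c; rewrite /blambda (lb_distr HA) !addrA. Qed.

Lemma lam0 w : lam w 0 = 0.
Proof. by apply: (addIr (lam w 0)); rewrite -lamD !add0r. Qed.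

HB.instance Definition _ (w : A) :=
  GRing.isNmodMorphism.Build A A (lam w) (lam0 w, lamD w).

Lemma brace_one0 : one = 0.
Proof.
have := lam0 one; rewrite /blambda (lb_mul1g HA) addr0 => /eqP.
by rewrite oppr_eq0 => /eqP.
Qed.

Lemma mul_lam x y : mul x y = x + lam x y.
Proof. by rewrite /blambda addNKr. Qed.

Lemma lam_one c : lam one c = c.
Proof. by rewrite /blambda (lb_mul1g HA) brace_one0 oppr0 add0r. Qed.

Lemma lamM u v c : lam (mul u v) c = lam u (lam v c).
Proof.
rewrite [lam v c]/blambda raddfD raddfN /= /blambda (lb_mulA HA) opprD opprK.
by rewrite -addrA addrCA addNKr.
Qed.

Lemma lamVK w c : lam (inv w) (lam w c) = c.
Proof. by rewrite -lamM (lb_mulVg HA) lam_one. Qed.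

Lemma lamKV w c : lam w (lam (inv w) c) = c.
Proof. by rewrite -lamM (lb_mulgV HA) lam_one. Qed.

Lemma inv_lam x : inv x = lam (inv x) (- x).
Proof.
by rewrite raddfN /= /blambda (lb_mulVg HA) brace_one0 addr0 opprK.
Qed.

Lemma lam_star w p q :
  lam w (bstar mul p q) = bstar mul (mul (mul w p) (inv w)) (lam w q).
Proof.
rewrite /bstar -[- p + _]/(lam p q) -[- _ + mul _ (lam w q)]/(lam _ (lam w q)).
by rewrite raddfB /= -!lamM -(lb_mulA HA) (lb_mulVg HA) (lb_mulg1 HA).
Qed.

Section ThirdTermTrivial.
Hypothesis H3 : forall x : A, brace_series mul 3 x -> x = 0.

(* Stars act trivially, since (p * q) * c lies in A^(3). *)
Lemma lam_star_trivial p q c : lam (bstar mul p q) c = c.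
Proof.
have : bstar mul (bstar mul p q) c = 0.
  by apply: H3 => S _ HS; apply: HS => // T _ HT; apply: HT.
by rewrite /bstar -/(lam _ c) => /eqP; rewrite subr_eq0 => /eqP.
Qed.

(* lambda is also a morphism of the additive group: x y = (x + y) g where g,
   a conjugate of the star x * y, acts trivially. *)
Lemma lam_addE x y c : lam (x + y) c = lam x (lam y c).
Proof.
set u := x + y; set g := lam (inv u) (bstar mul x y).
have g_trivial c' : lam g c' = c' by rewrite /g lam_star lam_star_trivial.
have ug_xy : mul u g = mul x y.
  rewrite mul_lam /g lamKV /bstar /u.
  by rewrite addrA (addrAC x) addrK addNKr.
by rewrite -lamM -ug_xy lamM g_trivial.
Qed.

Section Generated.
Variable a : A.

Local Notation ai := (a_idx mul one inv a).
Local Notation apow := (bpow mul one inv a).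

(* A list of (index, coefficient) pairs encodes the combination
   sum x_i a_i; its weight is the sum of the coefficients. *)
Definition comb (l : seq (int * int)) : A := \sum_(p <- l) ai p.1 *~ p.2.
Definition weight (l : seq (int * int)) : int := \sum_(p <- l) p.2.

Definition span (x : A) : Prop := exists l, x = comb l.
Definition span0 (x : A) : Prop := exists l, x = comb l /\ weight l = 0.

Definition coef (l : seq (int * int)) (i : int) : int :=
  \sum_(p <- l | p.1 == i) p.2.

Lemma comb_regroup l :
  comb l = \sum_(i <- undup (map fst l)) ai i *~ coef l i.
Proof.
rewrite /comb -(sum_group_fst (fun p => ai p.1 *~ p.2)).
by apply: eq_bigr => i _; rewrite mulrz_sumr; apply: eq_bigr => p /eqP ->.
Qed.

Lemma weight_regroup l : weight l = \sum_(i <- undup (map fst l)) coef l i.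
Proof. exact/esym/(sum_group_fst (fun p => p.2)). Qed.

Lemma Bset_span x : Bset mul one inv a x <-> span x.
Proof.
split=> [[s [f [_ ->]]] | [l ->]].
  by exists [seq (i, f i) | i <- s]; rewrite /comb big_map.
by exists (undup (map fst l)), (coef l); rewrite undup_uniq comb_regroup.
Qed.

Lemma Dset_span0 x : Dset mul one inv a x <-> span0 x.
Proof.
split=> [[s [f [_ -> H]]] | [l [-> H]]].
  by exists [seq (i, f i) | i <- s]; rewrite /comb /weight !big_map.
exists (undup (map fst l)), (coef l).
by rewrite undup_uniq comb_regroup -weight_regroup.
Qed.

Lemma comb_cat l1 l2 : comb (l1 ++ l2) = comb l1 + comb l2.
Proof. exact: big_cat. Qed.

Lemma weight_cat l1 l2 : weight (l1 ++ l2) = weight l1 + weight l2.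
Proof. exact: big_cat. Qed.

Lemma negate_coefs l : comb [seq (p.1, - p.2) | p <- l] = - comb l.
Proof. by rewrite /comb big_map -sumrN; apply: eq_bigr => p _; rewrite mulrNz. Qed.

Lemma span_add_subgroup : is_add_subgroup span.
Proof.
split.
- by exists [::]; rewrite /comb big_nil.
- by move=> _ _ [l1 ->] [l2 ->]; exists (l1 ++ l2); rewrite comb_cat.
- by move=> _ [l ->]; exists [seq (p.1, - p.2) | p <- l]; rewrite negate_coefs.
Qed.

Lemma span0_add_subgroup : is_add_subgroup span0.
Proof.
split.
- by exists [::]; rewrite /comb /weight !big_nil.
- move=> _ _ [l1 [-> H1]] [l2 [-> H2]]; exists (l1 ++ l2).
  by rewrite comb_cat weight_cat H1 H2 addr0.
- move=> _ [l [-> H]]; exists [seq (p.1, - p.2) | p <- l].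
  by move: H; rewrite negate_coefs /weight big_map sumrN => ->; rewrite oppr0.
Qed.

Lemma apow_succ i : mul a (apow i) = apow (i + 1).
Proof.
case: i => [k|[|k]].
- by rewrite -[1]/(Posz 1) -PoszD addn1.
- have -> : Negz 0 + 1 = 0 by rewrite NegzE; lia.
  by rewrite /bpow /= (lb_mulA HA) (lb_mulgV HA) (lb_mulg1 HA).
- have -> : Negz k.+1 + 1 = Negz k by rewrite !NegzE; lia.
  by rewrite /bpow /= (lb_mulA HA) (lb_mulgV HA) (lb_mul1g HA).
Qed.

Lemma a_idx0 : ai 0 = a.
Proof. exact: lam_one. Qed.

Definition shifts (x : A) (k : int) : Prop :=
  forall i, lam x (ai i) = ai (i + k).

Lemma shifts0 : shifts 0 0.
Proof. by move=> i; rewrite -brace_one0 lam_one addr0. Qed.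

Lemma shiftsD x y k m : shifts x k -> shifts y m -> shifts (x + y) (k + m).
Proof. by move=> Hx Hy i; rewrite lam_addE Hy Hx [k + m]addrC addrA. Qed.

Lemma shiftsN x k : shifts x k -> shifts (- x) (- k).
Proof.
move=> Hx i; rewrite -{1}(subrK k i) -Hx -lam_addE addNr.
by rewrite -brace_one0 lam_one.
Qed.

Lemma shiftsMz x k n : shifts x k -> shifts (x *~ n) (k * n).
Proof.
move=> Hx.
have shiftsMn m : shifts (x *+ m) (k * m%:Z).
  elim: m => [|m IH]; first by rewrite mulr0n mulr0; exact: shifts0.
  by rewrite mulrS -addn1 PoszD mulrDr mulr1 addrC; apply: shiftsD.
case: n => m; first exact: shiftsMn.
by rewrite NegzE mulrNz mulrN; apply/shiftsN/shiftsMn.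
Qed.

(* a_j acts as a, because a^j + a_j = a^j a and lambda is additive. *)
Lemma lam_a_idx j c : lam (ai j) c = lam a c.
Proof.
have E : apow j + ai j = mul (apow j) a by rewrite /a_idx /blambda addNKr.
have := lamM (apow j) a c.
by rewrite -E lam_addE => /(congr1 (lam (inv (apow j)))); rewrite !lamVK.
Qed.

(* lambda_a(a_i) = lambda_(a^(i+1))(a) = a_(i+1). *)
Lemma shifts_a_idx j : shifts (ai j) 1.
Proof. by move=> i; rewrite lam_a_idx {1}/a_idx -lamM apow_succ. Qed.

Lemma shifts_comb l : shifts (comb l) (weight l).
Proof.
elim: l => [|p l IH]; rewrite /comb /weight ?big_nil ?big_cons; first exact: shifts0.
by apply: shiftsD => //; have := shiftsMz p.2 (shifts_a_idx p.1); rewrite mul1r.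
Qed.

Lemma lam_comb w k l :
  shifts w k -> lam w (comb l) = comb [seq (p.1 + k, p.2) | p <- l].
Proof.
move=> Hw; rewrite /comb raddf_sum big_map.
by apply: eq_bigr => p _; rewrite raddfMz /= Hw.
Qed.

Lemma span_shifts x : span x -> exists k, shifts x k.
Proof. by move=> [l ->]; exists (weight l); apply: shifts_comb. Qed.

Lemma span_lam w k y : shifts w k -> span y -> span (lam w y).
Proof. by move=> Hw [l ->]; exists [seq (p.1 + k, p.2) | p <- l]; apply: lam_comb. Qed.

Lemma span_subbrace : is_subbrace mul one inv span.
Proof.
have [S0 SD SN] := span_add_subgroup.
split=> //; split.
- by rewrite brace_one0.
- move=> x y Sx Sy; have [k Hk] := span_shifts Sx.
  by rewrite mul_lam; apply/SD/(span_lam Hk).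
- move=> x Sx; have [k Hk] := span_shifts Sx.
  have Hinv : shifts (inv x) (- k).
    by move=> i; rewrite -{1}(subrK k i) -Hk -lamM (lb_mulVg HA) lam_one.
  by rewrite inv_lam; apply/(span_lam Hinv)/SN.
Qed.

Lemma span_a : span a.
Proof. by exists [:: (0, 1)]; rewrite /comb big_cons big_nil addr0 a_idx0. Qed.

Lemma subbrace_apow S : is_subbrace mul one inv S -> S a -> forall i, S (apow i).
Proof.
move=> [_ [S1 SM SV]] Sa [] k.
  by elim: k => [|k IH] //=; apply: SM.
by elim: k => [|k IH] /=; apply: SM => //; apply: SV.
Qed.

Lemma span_min S x : is_subbrace mul one inv S -> S a -> span x -> S x.
Proof.
move=> HS Sa [l ->]; have [[_ SD SN] [_ SM _]] := HS.
apply: add_subgroup_sum; first by case: HS.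
move=> p; apply: add_subgroupMz; first by case: HS.
have Sapow := subbrace_apow HS Sa.
by rewrite /a_idx /blambda; apply: SD; [apply: SN | apply: SM].
Qed.

Lemma Bset_gen x : Bset mul one inv a x <-> gen_subbrace mul one inv a x.
Proof.
rewrite Bset_span; split=> [Sx S HS Sa | Hx]; first exact: span_min.
exact: Hx span_subbrace span_a.
Qed.

(* l * m = lambda_l(m) - m is a shifted copy of m minus m: it has weight 0. *)
Lemma star_span0 l m : span l -> span m -> span0 (bstar mul l m).
Proof.
move=> /span_shifts [k Hk] [lm ->].
exists ([seq (p.1 + k, p.2) | p <- lm] ++ [seq (p.1, - p.2) | p <- lm]).
rewrite /bstar -[- l + _]/(lam l _) (lam_comb _ Hk) comb_cat negate_coefs.
by rewrite weight_cat /weight !big_map sumrN subrr.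
Qed.

Lemma star_apow_a i : bstar mul (apow i) a = ai i - a.
Proof. by []. Qed.

(* A weight-0 combination is sum x_i (a_i - a), a combination of stars. *)
Lemma span0_star x : span0 x ->
  set_star mul (Bset mul one inv a) (Bset mul one inv a) x.
Proof.
move=> [l [-> Hw]] S HS Sstar.
have -> : comb l = \sum_(p <- l) (ai p.1 - a) *~ p.2.
  under [RHS]eq_bigr do rewrite mulrzBl.
  by rewrite big_split /= sumrN -mulrz_sumr -/(weight l) Hw mulr0z subr0.
apply: add_subgroup_sum => // p; apply: add_subgroupMz => //.
rewrite -star_apow_a; apply: Sstar; apply/Bset_gen => S' HS' Sa //.
exact: subbrace_apow.
Qed.

Lemma star_Dset x :
  set_star mul (Bset mul one inv a) (Bset mul one inv a) x <->
  Dset mul one inv a x.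
Proof.
rewrite Dset_span0; split=> [Hx | /span0_star //].
apply: Hx; first exact: span0_add_subgroup.
by move=> l m /Bset_span Hl /Bset_span Hm; apply: star_span0.
Qed.

End Generated.
End ThirdTermTrivial.
End LeftBrace.

Theorem theoremB (A : zmodType) (mul : A -> A -> A) (one : A) (inv : A -> A)
  (HA : left_brace mul one inv)
  (H3 : forall x : A, brace_series mul 3 x -> x = 0)
  (a : A) :
  (forall x : A, Bset mul one inv a x <-> gen_subbrace mul one inv a x) /\
  (forall x : A, set_star mul (Bset mul one inv a) (Bset mul one inv a) x <->
                 Dset mul one inv a x).
Proof. by split=> x; [apply: Bset_gen | apply: star_Dset]. Qed.
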